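(* Let $\mathcal K$ denote one of the categories $\mathcal I$ or $\mathcal J$, with degree functor $\lambda(\mathbf k)=|\mathbf k|$ on $\mathcal I$ and $\lambda(\mathbf k_1,\mathbf k_2)=|\mathbf k_1|$ on $\mathcal J$. Suppose that $\mathcal A$ is a normal and multiplicative subcategory of automorphisms in $\mathcal K$ such that the inclusion $\mathcal K_{\mathcal A}\to\mathcal K$ is homotopy cofinal. Then $(\mathcal K,\mathcal A)$ is a well-structured relative index category, and if all objects of $\mathcal A$ have positive degree, then $(\mathcal K,\mathcal A)$ is very well-structured.
   Context: $\mathcal I$: objects $\mathbf n=\{1,\dots,n\}$, morphisms injections, symmetric monoidal under concatenation $\sqcup$ with unit $\mathbf 0$. $\mathcal J$: objects pairs $(\mathbf n_1,\mathbf n_2)$, morphisms $(\beta_1,\beta_2,\sigma)$ with $\beta_i$ injections and $\sigma$ a bijection between the complements of their images, composed by $(\beta_1\alpha_1,\beta_2\alpha_2,\tau)$ with $\tau=\sigma$ on $\mathbf n_1\setminus\beta_1$ and $\tau\beta_1=\beta_2\rho$ on $\mathbf m_1\setminus\alpha_1$; symmetric monoidal under componentwise concatenation with symmetry $(\chi,\chi,\mathrm{id})$. $\mathbb N_0$ is the poset $0\to1\to2\to\cdots$, symmetric monoidal under addition. A subcategory of automorphisms $\mathcal A$ of a small symmetric monoidal category $(\mathcal K,\sqcup,\mathbf 0)$ is a subcategory all of whose morphisms are automorphisms; $\mathcal A(\mathbf k)$ denotes its automorphism group at $\mathbf k$. It is normal if for each isomorphism $\alpha\colon\mathbf k\to\mathbf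 l$ of $\mathcal K$, $\mathbf k\in\mathcal A$ iff $\mathbf l\in\mathcal A$, and then $\gamma\mapsto\alpha\gamma\alpha^{-1}$ is an isomorphism $\mathcal A(\mathbf k)\to\mathcal A(\mathbf l)$; multiplicative if $\sqcup$ restricts to $\mathcal A\times\mathcal A\to\mathcal A$. $\mathcal K_{\mathcal A}$ is the full subcategory of $\mathcal K$ on the objects of $\mathcal A$. A subcategory $\mathcal B\subseteq\mathcal C$ is homotopy cofinal if each comma category $(c\downarrow\mathcal B)$ has contractible classifying space. A well-structured relative index category is $(\mathcal K,\lambda,\mathcal A)$ with $\lambda\colon\mathcal K\to\mathbb N_0$ strong symmetric monoidal and $\mathcal A$ normal multiplicative, such that: (i) a morphism $\mathbf k\to\mathbf l$ is an isomorphism iff $\lambda(\mathbf k)=\lambda(\mathbf l)$; (ii) for $\mathbf k\in\mathcal A$ and any $\mathbf l$, each connected component of the comma category $(\mathbf k\sqcup-\downarrow\mathbf l)$ (objects $(\mathbf n,\alpha\colon\mathbf k\sqcup\mathbf n\to\mathbf l)$) has a terminal object; (iii) for $\mathbf k\in\mathcal A$, the right action of $\mathcal A(\mathbf k)$ on $(\mathbf k\sqcup-\downarrow\mathbf l)$ induces a free action on its set of components; (iv) $\mathcal K_{\mathcal A}\to\mathcal K$ is homotopy cofinal. It is very well-structured if moreover for all $\mathbf k\in\mathcal A$, all $\mathbf l$ and $n\ge1$, the right action of $\Sigma_n\ltimes\mathcal A(\mathbf k)^{\times n}$ on $(\mathbf k^{\sqcup n}\sqcup-\downarrow\mathbf l)$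 (via $(\sigma;f_1,\dots,f_n)\mapsto\sigma_*\circ(f_1\sqcup\cdots\sqcup f_n)$, $\sigma_*$ the symmetry-induced permutation of $\mathbf k^{\sqcup n}$) is free on the set of connected components. *)

From Stdlib Require Import Relations.
From mathcomp Require Import all_boot all_fingroup.
Set Implicit Arguments. Unset Strict Implicit. Unset Printing Implicit Defensive.

(* A small (strict) symmetric monoidal category, given concretely by raw
   morphism data together with a validity predicate ([valid f] = "f is a
   morphism"), composition, identities, the monoidal product on objects and
   morphisms, the unit, a degree functor to N_0, and the permutation
   [bperm k n s] = s_* of k^{⊔n} = k ⊔ (k ⊔ ... ⊔ (k ⊔ 0)) induced by the
   symmetry (block i is moved to block s i). *)
Record SMCat := {
  ob : Type;
  hom : ob -> ob -> Type;
  valid : forall a b, hom a b -> bool;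
  idm : forall a, hom a a;
  comp : forall a b c, hom b c -> hom a b -> hom a c;
  tens : ob -> ob -> ob;
  tensh : forall a b c d, hom a b -> hom c d -> hom (tens a c) (tens b d);
  unit0 : ob;
  deg : ob -> nat;
  bperm : forall k n, 'S_n -> hom (iter n (tens k) unit0) (iter n (tens k) unit0)
}.
Arguments valid {s a b} : rename.
Arguments idm {s} a : rename.
Arguments comp {s a b c} : rename.
Arguments tensh {s a b c d} : rename.
Arguments tens : clear implicits.
Arguments deg : clear implicits.
Arguments hom : clear implicits.
Arguments bperm : clear implicits.

Definition homI (m n : nat) : Type := {ffun 'I_m -> 'I_n}.
Definition validI m n (f : homI m n) : bool := injectiveb f.
Definition idI n : homI n n := [ffun i => i].
Definition compI a b c (g : homI b c) (f : homI a b) : homI a c :=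
  [ffun i => g (f i)].
Definition tensI a b c d (f : homI a b) (g : homI c d) : homI (a + c) (b + d) :=
  [ffun i => match split i with
             | inl x => lshift d (f x)
             | inr y => rshift b (g y) end].
Definition perm_nat n (s : 'S_n) (b : nat) : nat :=
  match (insub b : option 'I_n) with Some b' => nat_of_ord (s b') | None => b end.
Definition bpermN (N k n : nat) (s : 'S_n) : homI N N :=
  [ffun i : 'I_N => insubd i (k * perm_nat s (i %/ k) + i %% k)].

Definition ICat : SMCat := {|
  ob := nat; hom := homI; valid := validI; idm := idI; comp := compI;
  tens := addn; tensh := tensI; unit0 := 0; deg := fun n => n;
  bperm := fun k n s => bpermN (iter n (addn k) 0) k s |}.

(* a morphism (m1,m2) -> (n1,n2) is (beta1, beta2, sigma); sigma is encoded
   as a map 'I_n1 -> option 'I_n2 which is None exactly on the image of beta1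
   and restricts to a bijection from the complement of im beta1 onto the
   complement of im beta2. *)
Definition homJ (a b : nat * nat) : Type :=
  ({ffun 'I_a.1 -> 'I_b.1} * {ffun 'I_a.2 -> 'I_b.2}
   * {ffun 'I_b.1 -> option 'I_b.2})%type.
Definition validJ a b (f : homJ a b) : bool :=
  [&& injectiveb f.1.1, injectiveb f.1.2,
   [forall x, (f.2 x == None) == (x \in codom f.1.1)],
   [forall x, forall y, (f.2 x == Some y) ==> (y \notin codom f.1.2)],
   [forall x, forall x', ((f.2 x == f.2 x') && (f.2 x != None)) ==> (x == x')] &
   [forall y, (y \notin codom f.1.2) ==> [exists x, f.2 x == Some y]]].
Definition idJ a : homJ a a := ([ffun i => i], [ffun i => i], [ffun _ => None]).
(* (beta, sigma) o (alpha, rho) = (beta1 alpha1, beta2 alpha2, tau) with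
   tau = sigma off im beta1 and tau (beta1 y) = beta2 (rho y) *)
Definition compJ a b c (g : homJ b c) (f : homJ a b) : homJ a c :=
  ([ffun i => g.1.1 (f.1.1 i)], [ffun i => g.1.2 (f.1.2 i)],
   [ffun x => if g.2 x is Some z then Some z else
              if [pick y : 'I_b.1 | g.1.1 y == x] is Some y
              then omap g.1.2 (f.2 y) else None]).
Definition tensJ (a c : nat * nat) : nat * nat := (a.1 + c.1, a.2 + c.2).
Definition tenshJ a b c d (f : homJ a b) (g : homJ c d) :
    homJ (tensJ a c) (tensJ b d) :=
  (tensI f.1.1 g.1.1, tensI f.1.2 g.1.2,
   [ffun x : 'I_(b.1 + d.1) => match split x with
     | inl u => omap (@lshift b.2 d.2) (f.2 u)
     | inr v => omap (@rshift b.2 d.2) (g.2 v) end]).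

Definition JCat : SMCat := {|
  ob := nat * nat; hom := homJ; valid := validJ; idm := idJ; comp := compJ;
  tens := tensJ; tensh := tenshJ; unit0 := (0, 0); deg := fst;
  bperm := fun k n s => (bpermN _ k.1 s, bpermN _ k.2 s, [ffun _ => None]) |}.

Section Generic.
Variable K : SMCat.

Definition is_iso (a b : ob K) (f : hom K a b) : Prop :=
  valid f /\ exists g : hom K b a, valid g /\ comp g f = idm a /\ comp f g = idm b.

Definition obpow (k : ob K) (n : nat) : ob K := iter n (tens K k) (unit0 K).

Definition deg_strong_monoidal : Prop :=
  deg K (unit0 K) = 0 /\
  (forall a b, deg K (tens K a b) = deg K a + deg K b) /\
  (forall a b (f : hom K a b), valid f -> deg K a <= deg K b).

Definition aut_subcat (Aob : ob K -> Prop) (Ahom : forall k, hom K k k -> Prop) :=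
  (forall k, Aob k -> Ahom k (idm k)) /\
  (forall k g, Ahom k g -> Aob k /\ is_iso g) /\
  (forall k g h, Ahom k g -> Ahom k h -> Ahom k (comp g h)).

Definition normal_autsub (Aob : ob K -> Prop) (Ahom : forall k, hom K k k -> Prop) :=
  forall k l (a : hom K k l) (b : hom K l k),
    valid a -> valid b -> comp b a = idm k -> comp a b = idm l ->
    (Aob k <-> Aob l) /\ (forall g, Ahom k g -> Ahom l (comp a (comp g b))).

Definition mult_autsub (Aob : ob K -> Prop) (Ahom : forall k, hom K k k -> Prop) :=
  (forall k l, Aob k -> Aob l -> Aob (tens K k l)) /\
  (forall k l g h, Ahom k g -> Ahom l h -> Ahom (tens K k l) (tensh g h)).

Definition cobj (k l : ob K) := {n : ob K & hom K (tens K k n) l}.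
Definition cvalid k l (x : cobj k l) : Prop := valid (projT2 x).
Definition cmor k l (x y : cobj k l) (f : hom K (projT1 x) (projT1 y)) : Prop :=
  valid f /\ comp (projT2 y) (tensh (idm k) f) = projT2 x.
Definition carrow k l (x y : cobj k l) : Prop :=
  cvalid x /\ cvalid y /\ exists f, @cmor k l x y f.
Definition cconn k l : relation (cobj k l) := clos_refl_sym_trans _ (@carrow k l).

Definition comps_have_terminal (k l : ob K) : Prop :=
  forall x : cobj k l, cvalid x ->
    exists t : cobj k l, cvalid t /\ cconn x t /\
      forall y : cobj k l, cvalid y -> cconn y t -> exists! f, @cmor k l y t f.

Definition cact k l (x : cobj k l) (g : hom K k k) : cobj k l :=
  existT _ (projT1 x) (comp (projT2 x) (tensh g (idm (projT1 x)))).

Definition free_on_comps (k l : ob K) (P : hom K k k -> Prop) : Prop :=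
  forall (x : cobj k l) g, cvalid x -> P g -> cconn (cact x g) x -> g = idm k.

Fixpoint tens_fam (k : ob K) (n : nat) :
    ('I_n -> hom K k k) -> hom K (obpow k n) (obpow k n) :=
  match n return ('I_n -> hom K k k) -> hom K (obpow k n) (obpow k n) with
  | 0 => fun _ => idm _
  | n'.+1 => fun f => tensh (f ord0) (@tens_fam k n' (fun i => f (lift ord0 i)))
  end.

(* right action of (s; f_1,...,f_n) in Sigma_n ⋉ A(k)^n, via s_* o (f_1 ⊔...⊔ f_n) *)
Definition cact_wr k n l (x : cobj (obpow k n) l) (s : 'S_n) (f : 'I_n -> hom K k k)
  : cobj (obpow k n) l :=
  existT _ (projT1 x)
    (comp (projT2 x) (tensh (comp (bperm K k n s) (tens_fam f)) (idm (projT1 x)))).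

(* (K, deg, A) is well-structured; HC A stands for
   "K_A -> K is homotopy cofinal" *)
Definition well_structured (HC : (ob K -> Prop) -> Prop)
    (Aob : ob K -> Prop) (Ahom : forall k, hom K k k -> Prop) : Prop :=
  deg_strong_monoidal /\ aut_subcat Aob Ahom /\ normal_autsub Aob Ahom /\
  mult_autsub Aob Ahom /\
  (forall a b (f : hom K a b), valid f -> (is_iso f <-> deg K a = deg K b)) /\
  (forall k l, Aob k -> comps_have_terminal k l) /\
  (forall k l, Aob k -> free_on_comps l (Ahom k)) /\
  HC Aob.

Definition very_well_structured (HC : (ob K -> Prop) -> Prop)
    (Aob : ob K -> Prop) (Ahom : forall k, hom K k k -> Prop) : Prop :=
  well_structured HC Aob Ahom /\
  forall k l n, Aob k -> 0 < n ->
    forall (x : cobj (obpow k n) l) (s : 'S_n) (f : 'I_n -> hom K k k),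
      cvalid x -> (forall i, Ahom k (f i)) -> cconn (cact_wr x s f) x ->
      s = 1%g /\ (forall i, f i = idm k).
End Generic.

(* Morphisms of the comma category (k ⊔ - ↓ l) do not change the restriction of
   the structure map to k, an injection k -> l (in J a pair of injections), so
   this restriction is constant on connected components.  Completing it by an
   enumeration of the complement of its image gives an isomorphism
   k ⊔ (l - k) -> l through which every object with the same restriction factors
   uniquely, so each component has a terminal object.  An automorphism g of k acts
   on the restriction by precomposition; the restriction being injective, g fixes
   a component only if g = id.  Likewise a fixed component of (k^{⊔n} ⊔ - ↓ l)
   forces s_* ∘ (f_1 ⊔ ... ⊔ f_n) = id, and reading this identity at position r
   of block i (which needs k nonempty) gives s = 1 and f_i = id.  In J, the
   bijection part of an endomorphism is trivial once its injections are. *)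

From mathcomp Require Import all_boot all_fingroup.
From Stdlib Require Import Relations.
Set Implicit Arguments. Unset Strict Implicit. Unset Printing Implicit Defensive.

Lemma cconn_invariant (K : SMCat) k l T (R : @cobj K k l -> T) :
  (forall x y, carrow x y -> R x = R y) -> forall x y, cconn x y -> R x = R y.
Proof. by move=> HR x y; elim=> [a b /HR | a | a b _ -> | a b c _ -> _ ->]. Qed.

Lemma split_lshift m n (u : 'I_m) : split (lshift n u) = inl u.
Proof. exact: (unsplitK (inl u)). Qed.

Lemma split_rshift m n (u : 'I_n) : split (rshift m u) = inr u.
Proof. exact: (unsplitK (inr u)). Qed.

Lemma complement_enum k l (a : 'I_k -> 'I_l) : injective a ->
  exists2 g : 'I_(l - k) -> 'I_l,
    injective g & forall y, (y \in codom g) = (y \notin codom a).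
Proof.
move=> inj_a; pose C := [predC codom a].
have cardC : l - k = #|C|.
  have := cardC (mem (codom a)); rewrite card_codom // !card_ord => E.
  by rewrite -[l in l - k]E addKn.
exists (fun v => enum_val (cast_ord cardC v)).
  by move=> v w /enum_val_inj /cast_ord_inj.
move=> y; apply/codomP/idP => [[v ->] | Cy]; first exact: (enum_valP (cast_ord cardC v)).
have {}Cy : y \in C by [].
by exists (cast_ord (esym cardC) (enum_rank_in Cy y)); rewrite cast_ordKV enum_rankK_in.
Qed.

Section Copair.
Variables (k m l : nat) (a : 'I_k -> 'I_l) (g : 'I_m -> 'I_l).
Hypotheses (inj_a : injective a) (inj_g : injective g)
  (codom_g : forall y, (y \in codom g) = (y \notin codom a)).

Definition copair : homI (k + m) l :=
  [ffun j => match split j with inl u => a u | inr v => g v end].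

Lemma copair_lshift u : copair (lshift m u) = a u.
Proof. by rewrite ffunE split_lshift. Qed.

Lemma copair_rshift v : copair (rshift k v) = g v.
Proof. by rewrite ffunE split_rshift. Qed.

Lemma complement_preim y : y \notin codom a -> exists w, g w = y.
Proof. by rewrite -codom_g => /codomP [w ->]; exists w. Qed.

Lemma copair_inj : injective copair.
Proof.
have a_neq_g u v : a u != g v.
  by apply/eqP => E; move: (codom_f g v); rewrite codom_g -E codom_f.
move=> j j'; case: (split_ordP j) => u ->; case: (split_ordP j') => u' ->;
  rewrite ?copair_lshift ?copair_rshift.
- by move/inj_a ->.
- by move/eqP; rewrite (negbTE (a_neq_g _ _)).
- by move/esym/eqP; rewrite (negbTE (a_neq_g _ _)).
- by move/inj_g ->.
Qed.

Lemma copair_onto y : y \in codom copair.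
Proof.
case: (boolP (y \in codom a)) => [/codomP [u ->] | /complement_preim [v <-]].
  by rewrite -copair_lshift codom_f.
by rewrite -copair_rshift codom_f.
Qed.

End Copair.

Lemma tensI_lshift a b c d (f : homI a b) (g : homI c d) u :
  tensI f g (lshift c u) = lshift d (f u).
Proof. by rewrite ffunE split_lshift. Qed.

Lemma tensI_rshift a b c d (f : homI a b) (g : homI c d) v :
  tensI f g (rshift a v) = rshift b (g v).
Proof. by rewrite ffunE split_rshift. Qed.

Lemma validI_leq a b (f : homI a b) : validI f -> a <= b.
Proof. by move/injectiveP/leq_card; rewrite !card_ord. Qed.

Lemma deg_strong_monoidalI : deg_strong_monoidal ICat.
Proof. by split; [|split=> // a b f /validI_leq]. Qed.

Lemma is_isoI_deg a b (f : hom ICat a b) :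
  valid f -> is_iso f <-> deg ICat a = deg ICat b.
Proof.
move=> vf; split=> [[_ [g [vg _]]] | /= eq_ab].
  by apply/eqP; rewrite eqn_leq (validI_leq vf) (validI_leq vg).
subst b; have inj_f : injective (f : homI a a) by apply/injectiveP.
split=> //; exists [ffun y => invF inj_f y]; split; [|split].
- by apply/injectiveP => x y; rewrite !ffunE => /(congr1 f); rewrite !f_invF.
- by apply/ffunP => x; rewrite !ffunE invF_f.
- by apply/ffunP => x; rewrite !ffunE f_invF.
Qed.

(* The restriction to k of a structure map k ⊔ n -> l; it labels the components of (k ⊔ - ↓ l). *)
Definition restrI k n l (a : homI (k + n) l) : homI k l := [ffun u => a (lshift n u)].

Lemma restrI_comp_tensI k n m l (a : homI (k + n) l) (g : homI k k) (h : homI m n) :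
  restrI (compI a (tensI g h)) = compI (restrI a) g.
Proof. by apply/ffunP => u; rewrite !ffunE split_lshift. Qed.

Lemma restrI_inj k n l (a : homI (k + n) l) : injective a -> injective (restrI a).
Proof. by move=> inj_a u v; rewrite !ffunE => /inj_a /lshift_inj. Qed.

Lemma compI_eq_idI k l (r : homI k l) (g : homI k k) :
  injective r -> compI r g = r -> g = idI k.
Proof. by move=> inj_r /ffunP E; apply/ffunP => u; move: (E u); rewrite !ffunE => /inj_r. Qed.

Lemma codom_restrI k n l (c : homI (k + n) l) y : y \in codom (restrI c) -> y \in codom c.
Proof. by case/codomP => u ->; rewrite ffunE codom_f. Qed.

Lemma codom_factor k m n l (c : homI (k + m) l) (g : 'I_n -> 'I_l) (F : 'I_m -> 'I_n) :
  injective g -> (forall y, (y \in codom g) = (y \notin codom (restrI c))) ->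
  (forall v, g (F v) = c (rshift k v)) -> forall w, (g w \in codom c) = (w \in codom F).
Proof.
move=> inj_g codom_g FE w; apply/codomP/codomP => [[j] | [v ->]]; last by exists (rshift k v).
case: (split_ordP j) => u -> E.
  by move: (codom_f g w); rewrite codom_g E; case/negP; apply/codomP; exists u; rewrite ffunE.
by exists u; apply: inj_g; rewrite FE.
Qed.

Lemma factor_through_complement k m n l (c : homI (k + m) l) (g : 'I_n -> 'I_l) :
  injective c -> (forall y, (y \in codom g) = (y \notin codom (restrI c))) ->
  exists F : 'I_m -> 'I_n, forall v, g (F v) = c (rshift k v).
Proof.
move=> inj_c codom_g.
suff /fin_all_exists [F FE] : forall v, exists w, g w = c (rshift k v) by exists F.
move=> v; apply: (complement_preim codom_g).
by apply/codomP => -[u]; rewrite ffunE => /inj_c /eqP; rewrite eq_rlshift.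
Qed.

Lemma compI_copair_tensI k m n l (c : homI (k + m) l) (g : 'I_n -> 'I_l) (F : 'I_m -> 'I_n) :
  (forall v, g (F v) = c (rshift k v)) ->
  compI (copair (restrI c) g) (tensI (idI k) [ffun v => F v]) = c.
Proof.
move=> FE; apply/ffunP => j; rewrite ffunE; case: (split_ordP j) => u ->.
  by rewrite tensI_lshift [idI _ _]ffunE copair_lshift ffunE.
by rewrite tensI_rshift [X in rshift _ X]ffunE copair_rshift FE.
Qed.

Lemma restrI_cconn k l (x y : @cobj ICat k l) :
  cconn x y -> restrI (projT2 x) = restrI (projT2 y).
Proof.
apply: (cconn_invariant (R := fun x : @cobj ICat k l => restrI (projT2 x))).
move=> -[n a] [m b] [_ [_ [f [_ E]]]]; rewrite /= in E *.
by rewrite -E restrI_comp_tensI; apply/ffunP => u; rewrite !ffunE.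
Qed.

Lemma free_on_compsI k l (P : hom ICat k k -> Prop) : free_on_comps l P.
Proof.
move=> [n a] g va _ /restrI_cconn /=; rewrite restrI_comp_tensI.
exact/(compI_eq_idI (restrI_inj (injectiveP _ va))).
Qed.

Lemma cmorI_uniq k l (y t : @cobj ICat k l) f f' :
  cvalid t -> cmor f -> @cmor ICat k l y t f' -> f = f'.
Proof.
case: y t f f' => [m c] [n b] f f' /injectiveP inj_b [_ E] [_ E'].
rewrite /= in E E'; rewrite -E' in E; apply/ffunP => v; move/ffunP: E => /(_ (rshift k v)).
by rewrite !ffunE !split_rshift => /inj_b /rshift_inj.
Qed.

Section TerminalI.
Variables (k l : nat) (r : homI k l) (g : 'I_(l - k) -> 'I_l).
Hypotheses (inj_r : injective r) (inj_g : injective g)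
  (codom_g : forall y, (y \in codom g) = (y \notin codom r)).

Definition termI : @cobj ICat k l := existT _ (l - k) (copair r g).

Lemma restrI_termI : restrI (projT2 termI) = r.
Proof. by apply/ffunP => u; rewrite [LHS]ffunE copair_lshift. Qed.

Lemma termI_valid : cvalid termI.
Proof. exact/injectiveP/copair_inj. Qed.

Lemma termI_factor (y : @cobj ICat k l) :
  cvalid y -> restrI (projT2 y) = r -> exists f, @cmor ICat k l y termI f.
Proof.
case: y => m c /injectiveP inj_c /= restr_c.
have codom_gc y : (y \in codom g) = (y \notin codom (restrI c)) by rewrite restr_c.
have [F FE] := factor_through_complement inj_c codom_gc.
exists [ffun v => F v]; split; last by rewrite /= -restr_c; apply: compI_copair_tensI.
by apply/injectiveP => v v'; rewrite !ffunE => /(congr1 g); rewrite !FE => /inj_c /rshift_inj.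
Qed.

End TerminalI.

Lemma comps_have_terminalI k l : comps_have_terminal (K:=ICat) k l.
Proof.
move=> [n a] va; have inj_r := restrI_inj (injectiveP _ va).
have [g inj_g codom_g] := complement_enum inj_r.
have vt := termI_valid inj_r inj_g codom_g.
have factor := termI_factor codom_g.
exists (termI (restrI a) g); split=> //; split.
  by apply: rst_step; split=> //; split=> //; apply: factor.
move=> y vy /restrI_cconn; rewrite restrI_termI => /(factor y vy) [f Hf].
by exists f; split=> // f'; apply: cmorI_uniq vt Hf.
Qed.

Lemma block_index_inj k a b r v : r < k -> v < k -> a * k + v = b * k + r -> a = b /\ v = r.
Proof.
move=> r_lt v_lt E; have k_gt0 : 0 < k by apply: leq_ltn_trans r_lt.
have Ediv := congr1 (divn^~ k) E; have Emod := congr1 (modn^~ k) E.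
rewrite /= !divnMDl // !divn_small // !addn0 in Ediv.
by rewrite /= !modnMDl !modn_small in Emod.
Qed.

Definition blockwise k n N (T : homI N N) (F : 'I_n -> 'I_k -> 'I_k) : Prop :=
  forall (i : 'I_n) (r : 'I_k) (j : 'I_N), j = i * k + r :> nat -> T j = i * k + F i r :> nat.

Lemma blockwise_tensI k n N (f : homI k k) (T : homI N N) (F : 'I_n.+1 -> 'I_k -> 'I_k) :
  f =1 F ord0 -> blockwise T (fun i => F (lift ord0 i)) -> blockwise (tensI f T) F.
Proof.
move=> Ef HT i r j; case: (split_ordP j) => u -> /=;
  case: (unliftP ord0 i) => [i'|] -> /=; rewrite ?lift0 /bump ?add1n ?mul0n ?add0n => Eu.
- by move: (ltn_ord u); rewrite Eu mulSn -addnA ltnNge leq_addr.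
- by rewrite tensI_lshift /= Ef; congr (nat_of_ord (F _ _)); apply: val_inj.
- have Eu' : u = i' * k + r :> nat by apply/eqP; rewrite -(eqn_add2l k) Eu mulSn addnA.
  by rewrite tensI_rshift /= (HT _ _ _ Eu') mulSn addnA.
- by move: (ltn_ord r); rewrite -Eu ltnNge leq_addr.
Qed.

Lemma block_index_lt k n i r : i < n -> r < k -> i * k + r < k * n.
Proof.
move=> i_lt r_lt; apply: (@leq_trans (i.+1 * k)); first by rewrite mulSn addnC ltn_add2r.
by rewrite mulnC leq_mul2l i_lt orbT.
Qed.

Lemma bpermN_val N k n (s : 'S_n) (i : 'I_n) (r : 'I_k) (j : 'I_N) :
  N = k * n -> j = i * k + r :> nat -> bpermN N k s j = s i * k + r :> nat.
Proof.
move=> EN Ej; have k_gt0 : 0 < k by apply: leq_ltn_trans (ltn_ord r).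
have div_j : j %/ k = i by rewrite Ej divnMDl // divn_small // addn0.
have mod_j : j %% k = r by rewrite Ej modnMDl modn_small.
have lt_N : s i * k + r < N by rewrite EN block_index_lt.
by rewrite ffunE val_insubd div_j mod_j /perm_nat valK mulnC lt_N.
Qed.

Lemma bpermN_blockwise_id N k n (s : 'S_n) (T : homI N N) (F : 'I_n -> 'I_k -> 'I_k) :
  N = k * n -> blockwise T F -> compI (bpermN N k s) T = idI N ->
  forall i r, s i = i /\ F i r = r.
Proof.
move=> EN HT /ffunP sT i r.
have lt_N : i * k + r < N by rewrite EN block_index_lt.
pose j := Ordinal lt_N.
move: (sT j); rewrite [compI _ _ _]ffunE [idI _ _]ffunE => /(congr1 val).
rewrite /= (bpermN_val s EN (HT i r j erefl)) => E.
by have [/val_inj -> /val_inj ->] := block_index_inj (ltn_ord r) (ltn_ord (F i r)) E.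
Qed.

Lemma tens_famI_blockwise k n (f : 'I_n -> hom ICat k k) :
  blockwise (tens_fam f : homI _ _) (fun i => f i).
Proof. by elim: n f => [|n IH] f; [case | apply: blockwise_tensI (IH _)]. Qed.

Lemma obpowI k n : @obpow ICat k n = k * n.
Proof. exact: iter_addn_0. Qed.

Lemma very_free_on_compsI k l n (x : @cobj ICat (@obpow ICat k n) l) s f :
  0 < k -> cvalid x -> cconn (cact_wr x s f) x -> s = 1%g /\ (forall i, f i = idm k).
Proof.
move=> k_gt0 vx /restrI_cconn; case: x vx => m a va /=.
rewrite restrI_comp_tensI => /(compI_eq_idI (restrI_inj (injectiveP _ va))).
move/(bpermN_blockwise_id (obpowI k n) (tens_famI_blockwise f)) => fixed.
split; first by apply/permP => i; rewrite perm1; case: (fixed i (Ordinal k_gt0)).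
by move=> i; apply/ffunP => r; rewrite ffunE; case: (fixed i r).
Qed.

Section ValidJ.
Variables (a b : nat * nat) (f : homJ a b).

Definition validJ_spec : Prop :=
  [/\ injective f.1.1, injective f.1.2,
   forall x, (f.2 x == None) = (x \in codom f.1.1),
   forall x y, f.2 x = Some y -> y \notin codom f.1.2 &
   (forall x x', f.2 x = f.2 x' -> f.2 x != None -> x = x') /\
   (forall y, y \notin codom f.1.2 -> exists x, f.2 x = Some y)].

Lemma validJP : validJ f <-> validJ_spec.
Proof.
split.
  case/andP => /injectiveP i1.
  case/and5P => /injectiveP i2 /forallP c3 /forallP c4 /forallP c5 /forallP c6.
  split=> //.
  - by move=> x; apply/eqP: (c3 x).
  - by move=> x y E; move/forallP/(_ y)/implyP: (c4 x); apply; rewrite E.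
  split=> [x x' E N | y /(implyP (c6 y)) /existsP [x /eqP]]; last by exists x.
  by move/forallP/(_ x')/implyP: (c5 x); rewrite N E eqxx => /(_ isT) /eqP.
case=> i1 i2 c3 c4 [c5 c6]; apply/andP; split; first exact/injectiveP.
apply/and5P; split; first exact/injectiveP.
- by apply/forallP => x; rewrite c3.
- by apply/forallP => x; apply/forallP => y; apply/implyP => /eqP; apply: c4.
- apply/forallP => x; apply/forallP => x'; apply/implyP => /andP [/eqP E N].
  by rewrite (c5 _ _ E N).
- by apply/forallP => y; apply/implyP => /c6 [x E]; apply/existsP; exists x; rewrite E.
Qed.

End ValidJ.

Lemma homJ_ext a b (x y : homJ a b) :
  x.1.1 = y.1.1 -> x.1.2 = y.1.2 -> x.2 = y.2 -> x = y.
Proof. by case: x => [[? ?] ?]; case: y => [[? ?] ?] /= -> -> ->. Qed.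

Lemma validJ_leq a b (f : homJ a b) : validJ f -> a.1 <= b.1.
Proof. by case/validJP => i1 _ _ _ _; move: (leq_card _ i1); rewrite !card_ord. Qed.

Lemma deg_strong_monoidalJ : deg_strong_monoidal JCat.
Proof. by split; [|split=> // a b f /validJ_leq]. Qed.

Lemma validJ_eq_idJ a (f : homJ a a) :
  validJ f -> f.1.1 = idI a.1 -> f.1.2 = idI a.2 -> f = idJ a.
Proof.
case/validJP => _ _ c3 _ _ f1 f2; apply: homJ_ext => //; apply/ffunP => x.
by rewrite ffunE; apply/eqP; rewrite c3 f1; apply/codomP; exists x; rewrite ffunE.
Qed.

Lemma is_isoJ_deg a b (f : hom JCat a b) :
  valid f -> is_iso f <-> deg JCat a = deg JCat b.
Proof.
move=> vf; split=> [[_ [g [vg _]]] | ].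
  by apply/eqP; rewrite eqn_leq (validJ_leq vf) (validJ_leq vg).
case: a b f vf => [a1 a2] [b1 b2] /= f vf eq_ab; subst b1.
move/validJP: (vf) => [i1 i2 c3 _ [_ c6]].
have onto1 x : x \in codom f.1.1 by apply: inj_card_onto.
have none x : f.2 x = None by apply/eqP; rewrite c3.
have onto2 y : y \in codom f.1.2 by apply/negPn/negP => /c6 [x]; rewrite none.
have eq_a2 : a2 = b2.
  apply/eqP; rewrite eqn_leq; move: (leq_card _ i2); rewrite !card_ord => ->.
  have : #|'I_b2| <= #|codom f.1.2| by apply/subset_leq_card/subsetP => y _.
  by rewrite card_codom // !card_ord.
subst b2; split=> //.
exists ([ffun y => invF i1 y], [ffun y => invF i2 y], [ffun _ => None]); split; [|split].
- apply/validJP; split=> //=.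
  + by move=> x y; rewrite !ffunE => /(congr1 f.1.1); rewrite !f_invF.
  + by move=> x y; rewrite !ffunE => /(congr1 f.1.2); rewrite !f_invF.
  + by move=> x; rewrite ffunE eqxx; apply/esym/codomP; exists (f.1.1 x); rewrite ffunE invF_f.
  + by move=> x y; rewrite ffunE.
  + split=> [x x' _ | y /codomP []]; first by rewrite ffunE.
    by exists (f.1.2 y); rewrite ffunE invF_f.
- congr (_, _, _); apply/ffunP => x; rewrite !ffunE //= ?invF_f //.
  by case: pickP => // y _; rewrite none.
- congr (_, _, _); apply/ffunP => x; rewrite !ffunE //= ?f_invF // none.
  by case: pickP => // y _; rewrite ffunE.
Qed.

Lemma restrJ_cconn k l (x y : @cobj JCat k l) : cconn x y ->
  restrI (projT2 x).1.1 = restrI (projT2 y).1.1 /\ restrI (projT2 x).1.2 = restrI (projT2 y).1.2.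
Proof.
move=> C; apply/pair_equal_spec; move: x y C.
apply: (cconn_invariant (R := fun x : @cobj JCat k l =>
  (restrI (projT2 x).1.1, restrI (projT2 x).1.2))).
move=> -[n a] [m b] [_ [_ [f [_ E]]]]; rewrite /= in E *; rewrite -E /=.
by rewrite !restrI_comp_tensI; congr (_, _); apply/ffunP => u; rewrite !ffunE.
Qed.

Lemma free_on_compsJ k l (P : hom JCat k k -> Prop) :
  (forall g, P g -> valid g) -> free_on_comps l P.
Proof.
move=> validP [n a] g va Pg /restrJ_cconn /=; rewrite !restrI_comp_tensI.
have /validJP [inj_a1 inj_a2 _ _ _] := va.
case=> /(compI_eq_idI (restrI_inj inj_a1)) g1 /(compI_eq_idI (restrI_inj inj_a2)) g2.
exact: validJ_eq_idJ (validP g Pg) g1 g2.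
Qed.

Lemma compJ2_on_image a b c (g : homJ b c) (f : homJ a b) y :
  validJ g -> (compJ g f).2 (g.1.1 y) = omap g.1.2 (f.2 y).
Proof.
case/validJP => inj_g1 _ c3 _ _; rewrite ffunE.
have -> : g.2 (g.1.1 y) = None by apply/eqP; rewrite c3 codom_f.
by case: pickP => [y' /eqP /inj_g1 -> // | /(_ y)]; rewrite eqxx.
Qed.

Lemma tenshJ2_lshift a b c d (f : homJ a b) (g : homJ c d) u :
  (tenshJ f g).2 (lshift _ u) = omap (@lshift b.2 d.2) (f.2 u).
Proof. by rewrite ffunE split_lshift. Qed.

Lemma tenshJ2_rshift a b c d (f : homJ a b) (g : homJ c d) v :
  (tenshJ f g).2 (rshift _ v) = omap (@rshift b.2 d.2) (g.2 v).
Proof. by rewrite ffunE split_rshift. Qed.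

Lemma cmorJ_uniq k l (y t : @cobj JCat k l) f f' :
  cvalid t -> cmor f -> @cmor JCat k l y t f' -> f = f'.
Proof.
case: y t f f' => [m c] [n b] f f' vt [_ E] [_ E']; rewrite /= in E E' vt.
have /validJP [inj_b1 inj_b2 _ _ _] := vt; rewrite -E' in E.
apply: homJ_ext; apply/ffunP => v.
- move: (congr1 (fun h : homJ (tensJ k m) l => h.1.1 (rshift k.1 v)) E).
  by rewrite /= !ffunE !split_rshift => /inj_b1 /rshift_inj.
- move: (congr1 (fun h : homJ (tensJ k m) l => h.1.2 (rshift k.2 v)) E).
  by rewrite /= !ffunE !split_rshift => /inj_b2 /rshift_inj.
- move: (congr1 (fun h : homJ (tensJ k m) l => h.2 (b.1.1 (rshift k.1 v))) E).
  rewrite !compJ2_on_image // !tenshJ2_rshift.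
  by case: (f.2 v) => [w|]; case: (f'.2 v) => [w'|] //= [/inj_b2 /rshift_inj ->].
Qed.

Section TerminalJ.
Variables (k l : nat * nat) (r1 : homI k.1 l.1) (r2 : homI k.2 l.2)
  (g1 : 'I_(l.1 - k.1) -> 'I_l.1) (g2 : 'I_(l.2 - k.2) -> 'I_l.2).
Hypotheses (inj_r1 : injective r1) (inj_r2 : injective r2)
  (inj_g1 : injective g1) (inj_g2 : injective g2)
  (codom_g1 : forall y, (y \in codom g1) = (y \notin codom r1))
  (codom_g2 : forall y, (y \in codom g2) = (y \notin codom r2)).

Definition termJ : @cobj JCat k l :=
  existT _ (l.1 - k.1, l.2 - k.2) (copair r1 g1, copair r2 g2, [ffun _ => None]).

Lemma restrJ_termJ :
  restrI (projT2 termJ).1.1 = r1 /\ restrI (projT2 termJ).1.2 = r2.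
Proof. by split; apply/ffunP => u; rewrite [LHS]ffunE copair_lshift. Qed.

Lemma termJ_valid : cvalid termJ.
Proof.
apply/validJP; split=> /=; try exact: copair_inj.
- by move=> x; rewrite ffunE eqxx copair_onto.
- by move=> x y; rewrite ffunE.
split=> [x x' | y]; first by rewrite ffunE.
by rewrite copair_onto.
Qed.

Section FactorJ.
Variables (m : nat * nat) (c : homJ (tensJ k m) l)
  (F1 : 'I_m.1 -> 'I_(l.1 - k.1)) (F2 : 'I_m.2 -> 'I_(l.2 - k.2)).
Hypotheses (vc : validJ c) (restr_c1 : restrI c.1.1 = r1) (restr_c2 : restrI c.1.2 = r2)
  (F1E : forall v, g1 (F1 v) = c.1.1 (rshift k.1 v))
  (F2E : forall v, g2 (F2 v) = c.1.2 (rshift k.2 v)).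

(* c's bijection part, transported along g1 and g2. *)
Definition tauJ : {ffun 'I_(l.1 - k.1) -> option 'I_(l.2 - k.2)} :=
  [ffun w => if c.2 (g1 w) is Some z then [pick w' | g2 w' == z] else None].

Definition factorJ : homJ m (l.1 - k.1, l.2 - k.2) := ([ffun v => F1 v], [ffun v => F2 v], tauJ).

Let codom_F1 w : (g1 w \in codom c.1.1) = (w \in codom F1).
Proof. by apply: (codom_factor (c := c.1.1) inj_g1 _ F1E); rewrite restr_c1. Qed.

Let codom_F2 w : (g2 w \in codom c.1.2) = (w \in codom F2).
Proof. by apply: (codom_factor (c := c.1.2) inj_g2 _ F2E); rewrite restr_c2. Qed.

Lemma tauJE w : omap g2 (tauJ w) = c.2 (g1 w).
Proof.
have /validJP [_ _ _ c4 _] := vc; rewrite ffunE.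
case E: (c.2 (g1 w)) => [z|] //=; case: pickP => [w' /eqP <- // | none].
have /(complement_preim codom_g2) [w' Ew'] : z \notin codom r2.
  by apply: contra (c4 _ _ E); rewrite -restr_c2; apply: codom_restrI.
by move: (none w'); rewrite Ew' eqxx.
Qed.

Lemma factorJ_valid : validJ factorJ.
Proof.
have /validJP [inj_c1 inj_c2 c3 c4 [c5 c6]] := vc.
apply/validJP; split=> /=; rewrite ?(eq_codom (ffunE _)).
- by move=> v v'; rewrite !ffunE => /(congr1 g1); rewrite !F1E => /inj_c1 /rshift_inj.
- by move=> v v'; rewrite !ffunE => /(congr1 g2); rewrite !F2E => /inj_c2 /rshift_inj.
- by move=> w; rewrite -codom_F1 -c3 -tauJE; case: (tauJ w).
- move=> w y Ew; rewrite -codom_F2; apply: c4 (g1 w) _ _.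
  by rewrite -tauJE Ew.
split=> [w w' Eww' | y].
  have E : c.2 (g1 w) = c.2 (g1 w') by rewrite -!tauJE Eww'.
  move=> N; apply: inj_g1; apply: c5 E _.
  by rewrite -tauJE; case: (tauJ w) N.
rewrite -codom_F2 => /c6 [x Ex].
have /codomP [w xE] : x \in codom g1.
  rewrite codom_g1 -restr_c1; apply: contra (codom_restrI (c := c.1.1) (y := x)) _.
  by rewrite -c3 Ex.
by exists w; move: (tauJE w); rewrite -xE Ex; case: (tauJ w) => //= y' [/inj_g2 ->].
Qed.

Lemma factorJ_comm : compJ (projT2 termJ) (tenshJ (idJ k) factorJ) = c.
Proof.
have /validJP [_ _ c3 _ _] := vc.
apply: homJ_ext.
- by rewrite /= -restr_c1; apply: compI_copair_tensI.
- by rewrite /= -restr_c2; apply: compI_copair_tensI.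
apply/ffunP => x; have /codomP [j ->] := copair_onto codom_g1 x.
rewrite compJ2_on_image; last exact: termJ_valid.
case: (split_ordP j) => u ->.
  rewrite tenshJ2_lshift [(idJ k).2 _]ffunE copair_lshift -restr_c1 ffunE.
  by apply/esym/eqP; rewrite c3 codom_f.
rewrite tenshJ2_rshift copair_rshift -tauJE.
by case: (tauJ u) => //= w; rewrite copair_rshift.
Qed.

End FactorJ.

Lemma termJ_factor (y : @cobj JCat k l) :
  cvalid y -> restrI (projT2 y).1.1 = r1 -> restrI (projT2 y).1.2 = r2 ->
  exists f, @cmor JCat k l y termJ f.
Proof.
case: y => m c vc /= restr_c1 restr_c2; have /validJP [inj_c1 inj_c2 _ _ _] := vc.
have codom_gc1 y : (y \in codom g1) = (y \notin codom (restrI c.1.1)) by rewrite restr_c1.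
have codom_gc2 y : (y \in codom g2) = (y \notin codom (restrI c.1.2)) by rewrite restr_c2.
have [F1 F1E] := factor_through_complement inj_c1 codom_gc1.
have [F2 F2E] := factor_through_complement inj_c2 codom_gc2.
by exists (factorJ c F1 F2); split; [apply: factorJ_valid | apply: factorJ_comm].
Qed.

End TerminalJ.

Lemma comps_have_terminalJ k l : comps_have_terminal (K:=JCat) k l.
Proof.
move=> [n a] va; have /validJP [inj_a1 inj_a2 _ _ _] := va.
have inj_r1 := restrI_inj inj_a1; have inj_r2 := restrI_inj inj_a2.
have [g1 inj_g1 codom_g1] := complement_enum inj_r1.
have [g2 inj_g2 codom_g2] := complement_enum inj_r2.
have vt := termJ_valid inj_r1 inj_r2 inj_g1 inj_g2 codom_g1 codom_g2.
have factor := termJ_factor inj_r1 inj_r2 inj_g1 inj_g2 codom_g1 codom_g2.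
have [restr_t1 restr_t2] := restrJ_termJ (restrI a.1.1) (restrI a.1.2) g1 g2.
exists (termJ (restrI a.1.1) (restrI a.1.2) g1 g2); split=> //; split.
  by apply: rst_step; split=> //; split=> //; apply: factor.
move=> y vy /restrJ_cconn []; rewrite restr_t1 restr_t2 => /(factor y vy) f_ex /f_ex [f Hf].
by exists f; split=> // f'; apply: cmorJ_uniq vt Hf.
Qed.

Lemma obpowJ k n : (@obpow JCat k n).1 = k.1 * n /\ (@obpow JCat k n).2 = k.2 * n.
Proof. by elim: n => [|n [IH1 IH2]]; rewrite ?muln0 //= -/(obpow _ _) IH1 IH2 !mulnS. Qed.

Lemma tens_famJ_blockwise1 k n (f : 'I_n -> hom JCat k k) :
  blockwise (tens_fam f : homJ _ _).1.1 (fun i => (f i).1.1).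
Proof. by elim: n f => [|n IH] f; [case | apply: blockwise_tensI (IH _)]. Qed.

Lemma tens_famJ_blockwise2 k n (f : 'I_n -> hom JCat k k) :
  blockwise (tens_fam f : homJ _ _).1.2 (fun i => (f i).1.2).
Proof. by elim: n f => [|n IH] f; [case | apply: blockwise_tensI (IH _)]. Qed.

Lemma very_free_on_compsJ k l n (x : @cobj JCat (@obpow JCat k n) l) s f :
  0 < k.1 -> cvalid x -> (forall i, valid (f i)) -> cconn (cact_wr x s f) x ->
  s = 1%g /\ (forall i, f i = idm k).
Proof.
move=> k_gt0 vx vf /restrJ_cconn; case: x vx => m a va /=.
have /validJP [inj_a1 inj_a2 _ _ _] := va; have [EN1 EN2] := obpowJ k n.
rewrite !restrI_comp_tensI.
case=> /(compI_eq_idI (restrI_inj inj_a1)) id1 /(compI_eq_idI (restrI_inj inj_a2)) id2.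
have fixed1 := bpermN_blockwise_id EN1 (tens_famJ_blockwise1 f) id1.
have fixed2 := bpermN_blockwise_id EN2 (tens_famJ_blockwise2 f) id2.
split; first by apply/permP => i; rewrite perm1; case: (fixed1 i (Ordinal k_gt0)).
move=> i; apply: validJ_eq_idJ (vf i) _ _; apply/ffunP => r; rewrite ffunE.
  by case: (fixed1 i r).
by case: (fixed2 i r).
Qed.

Lemma well_structured_of (K : SMCat) (HC : (ob K -> Prop) -> Prop)
    (Aob : ob K -> Prop) (Ahom : forall k, hom K k k -> Prop) :
  deg_strong_monoidal K ->
  (forall a b (f : hom K a b), valid f -> is_iso f <-> deg K a = deg K b) ->
  (forall k l, comps_have_terminal (K := K) k l) ->
  (forall k l, Aob k -> free_on_comps l (Ahom k)) ->
  aut_subcat Aob Ahom -> normal_autsub Aob Ahom -> mult_autsub Aob Ahom -> HC Aob ->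
  well_structured HC Aob Ahom.
Proof. by move=> *; do 7!split=> //. Qed.

Lemma aut_subcat_valid (K : SMCat) (Aob : ob K -> Prop) (Ahom : forall k, hom K k k -> Prop) :
  aut_subcat Aob Ahom -> forall k g, Ahom k g -> valid g.
Proof. by case=> _ [autA _] k g /autA [_ []]. Qed.

Lemma well_structuredI HC Aob Ahom :
  aut_subcat Aob Ahom -> normal_autsub Aob Ahom -> mult_autsub Aob Ahom -> HC Aob ->
  well_structured (K := ICat) HC Aob Ahom.
Proof.
apply: well_structured_of; [exact: deg_strong_monoidalI | exact: is_isoI_deg |
  exact: comps_have_terminalI | move=> k l _; exact: free_on_compsI].
Qed.

Lemma very_well_structuredI HC Aob Ahom :
  well_structured (K := ICat) HC Aob Ahom -> (forall k, Aob k -> 0 < k) ->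
  very_well_structured HC Aob Ahom.
Proof.
move=> ws deg_gt0; split=> // k l n Ak _ x s f vx _.
exact: very_free_on_compsI (deg_gt0 k Ak) vx.
Qed.

Lemma well_structuredJ HC Aob Ahom :
  aut_subcat Aob Ahom -> normal_autsub Aob Ahom -> mult_autsub Aob Ahom -> HC Aob ->
  well_structured (K := JCat) HC Aob Ahom.
Proof.
move=> autA; apply: well_structured_of => //; [exact: deg_strong_monoidalJ |
  exact: is_isoJ_deg | exact: comps_have_terminalJ |
  move=> k l _; apply: free_on_compsJ; exact: aut_subcat_valid autA k].
Qed.

Lemma very_well_structuredJ HC Aob Ahom :
  well_structured (K := JCat) HC Aob Ahom -> (forall k, Aob k -> 0 < k.1) ->
  very_well_structured HC Aob Ahom.
Proof.
move=> ws deg_gt0; split=> // k l n Ak _ x s f vx Af.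
have [_ [autA _]] := ws.
by apply: very_free_on_compsJ (deg_gt0 k Ak) vx _ => i; apply: aut_subcat_valid autA _ _ (Af i).
Qed.

Theorem proposition5p7 (K : SMCat) (HC : (ob K -> Prop) -> Prop)
    (Aob : ob K -> Prop) (Ahom : forall k, hom K k k -> Prop) :
  (K = ICat \/ K = JCat) ->
  aut_subcat Aob Ahom -> normal_autsub Aob Ahom -> mult_autsub Aob Ahom ->
  HC Aob ->
  well_structured HC Aob Ahom /\
  ((forall k, Aob k -> 0 < deg K k) -> very_well_structured HC Aob Ahom).
Proof.
case=> ?; subst K => autA normalA multA cofinalA.
- have ws := well_structuredI autA normalA multA cofinalA.
  by split=> //; apply: very_well_structuredI.
- have ws := well_structuredJ autA normalA multA cofinalA.
  by split=> //; apply: very_well_structuredJ.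
Qed.
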